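(* Let $\mathrm{PARITY}:\{0,1\}^n\rightarrow\{0,1\}$, $\mathrm{PARITY}(x)=\bigoplus_i x_i$. Then $UC(\mathrm{PARITY})=WUC(\mathrm{PARITY})=n$ and $UQ(\mathrm{PARITY})=WUQ(\mathrm{PARITY})=\lceil n/2\rceil$.
   Context: Query model: a classical randomized query algorithm adaptively queries input bits $x_i$ (each query costs one) and outputs a bit; a quantum query algorithm alternates input-independent unitaries with the oracle $O_x:|i,b,z\rangle\mapsto|i,b\oplus x_i,z\rangle$ and measures an output bit. $UQ(f)$ (resp. $UC(f)$) is the minimum number of queries of a quantum (resp. classical randomized) algorithm that on every input outputs $f(x)$ with probability strictly greater than $1/2$. For an algorithm whose minimum over inputs of the success probability is $p>1/2$, its bias is $\beta=p-1/2$ and its weakly unbounded cost is (number of queries) $+\log(1/(2\beta))$; $WUQ(f)$ (resp. $WUC(f)$) is the minimum weakly unbounded cost over quantum (resp. classical randomized) algorithms. $\log$ is base 2. *)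

From HB Require Import structures.
From mathcomp Require Import all_boot all_order all_algebra.
From mathcomp Require Import reals exp.
From mathcomp Require Import complex.
From Stdlib Require List.

Set Implicit Arguments.
Unset Strict Implicit.
Unset Printing Implicit Defensive.

Import Order.TTheory GRing.Theory Num.Theory.
Local Open Scope ring_scope.

Definition input (n : nat) := {ffun 'I_n -> bool}.

Definition parity (n : nat) (x : input n) : bool :=
  \big[addb/false]_(i < n) x i.

Definition log2 {R : realType} (y : R) : R := ln y / ln 2.

Inductive dtree (n : nat) : Type :=
| DLeaf of bool
| DQuery of 'I_n & dtree n & dtree n.

Fixpoint dt_eval (n : nat) (t : dtree n) (x : input n) : bool :=
  match t with
  | DLeaf b => b
  | DQuery i t0 t1 => if x i then dt_eval t1 x else dt_eval t0 x
  end.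

Fixpoint dt_depth (n : nat) (t : dtree n) : nat :=
  match t with
  | DLeaf _ => 0
  | DQuery _ t0 t1 => (maxn (dt_depth t0) (dt_depth t1)).+1
  end.

(** A randomized algorithm making (at most) [ra_T] queries: a finite
    probability distribution over deterministic decision trees, each making
    at most [ra_T] queries. *)
Record rand_alg (R : realType) (n : nat) := RandAlg {
  ra_T : nat;
  ra_dist : seq (R * dtree n)
}.

Definition rand_alg_valid (R : realType) (n : nat) (A : rand_alg R n) : Prop :=
  [/\ forall p, List.In p (ra_dist A) -> 0 <= p.1,
      \sum_(p <- ra_dist A) p.1 = 1
    & forall p, List.In p (ra_dist A) -> (dt_depth p.2 <= ra_T A)%N].

Definition ra_prob (R : realType) (n : nat) (A : rand_alg R n)
    (x : input n) (b : bool) : R :=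
  \sum_(p <- ra_dist A) p.1 * (dt_eval p.2 x == b)%:R.

Definition ra_minsucc (R : realType) (n : nat) (A : rand_alg R n)
    (f : input n -> bool) : R :=
  \big[Num.min/1]_(x : input n) ra_prob A x (f x).

Definition ra_bias (R : realType) n (A : rand_alg R n) f : R :=
  ra_minsucc A f - 1 / 2.

Definition ra_wucost (R : realType) n (A : rand_alg R n) f : R :=
  (ra_T A)%:R + log2 (1 / (2 * ra_bias A f)).

(** Basis states |i, b, z> with query register i : 'I_n, answer bit b and
    workspace z : 'I_m.+1 (workspace of arbitrary finite dimension m+1). *)
Definition qbasis (n m : nat) := ('I_n * bool * 'I_m.+1)%type.

Definition qvec (R : realType) n m := qbasis n m -> R[i].
Definition qop (R : realType) n m := qbasis n m -> qbasis n m -> R[i].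

Definition qapply (R : realType) n m (U : qop R n m) (v : qvec R n m)
  : qvec R n m := fun s => \sum_(t : qbasis n m) U s t * v t.

Definition unitary (R : realType) n m (U : qop R n m) : Prop :=
  (forall s t, \sum_(k : qbasis n m) U s k * (U t k)^* = (s == t)%:R) /\
  (forall s t, \sum_(k : qbasis n m) (U k s)^* * U k t = (s == t)%:R).

Definition oracle (R : realType) n m (x : input n) (v : qvec R n m)
  : qvec R n m := fun s => v (s.1.1, s.1.2 (+) x s.1.1, s.2).

Definition ket (R : realType) n m (s0 : qbasis n m) : qvec R n m :=
  fun s => (s == s0)%:R.

(** A quantum algorithm with [size qa_Us] queries: starting in the basis
    state [qa_init], apply [qa_U0], then alternately O_x and the next
    unitary of [qa_Us]; finally measure in the computational basis and
    output [qa_out] of the outcome. *)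
Record qalg (R : realType) (n m : nat) := QAlg {
  qa_init : qbasis n m;
  qa_U0 : qop R n m;
  qa_Us : seq (qop R n m);
  qa_out : qbasis n m -> bool
}.

Definition qa_T (R : realType) n m (A : qalg R n m) : nat := size (qa_Us A).

Definition qalg_valid (R : realType) n m (A : qalg R n m) : Prop :=
  unitary (qa_U0 A) /\ (forall U, List.In U (qa_Us A) -> unitary U).

Definition qa_final (R : realType) n m (A : qalg R n m) (x : input n)
  : qvec R n m :=
  foldl (fun v U => qapply U (oracle x v)) (qapply (qa_U0 A) (ket R (qa_init A)))
        (qa_Us A).

Definition normsq (R : realType) (z : R[i]) : R :=
  complex.Re z ^+ 2 + complex.Im z ^+ 2.

Definition qa_prob (R : realType) n m (A : qalg R n m) (x : input n)
    (b : bool) : R :=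
  \sum_(s : qbasis n m | qa_out A s == b) normsq (qa_final A x s).

Definition qa_minsucc (R : realType) n m (A : qalg R n m)
    (f : input n -> bool) : R :=
  \big[Num.min/1]_(x : input n) qa_prob A x (f x).

Definition qa_bias (R : realType) n m (A : qalg R n m) f : R :=
  qa_minsucc A f - 1 / 2.

Definition qa_wucost (R : realType) n m (A : qalg R n m) f : R :=
  (qa_T A)%:R + log2 (1 / (2 * qa_bias A f)).

Definition UC_is (R : realType) (n : nat) (f : input n -> bool) (k : nat) :=
  (exists A : rand_alg R n, [/\ rand_alg_valid A,
      forall x, ra_prob A x (f x) > 1 / 2 & ra_T A = k]) /\
  (forall A : rand_alg R n, rand_alg_valid A ->
      (forall x, ra_prob A x (f x) > 1 / 2) -> (k <= ra_T A)%N).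

Definition WUC_is (R : realType) (n : nat) (f : input n -> bool) (c : R) :=
  (exists A : rand_alg R n, [/\ rand_alg_valid A,
      ra_minsucc A f > 1 / 2 & ra_wucost A f = c]) /\
  (forall A : rand_alg R n, rand_alg_valid A ->
      ra_minsucc A f > 1 / 2 -> c <= ra_wucost A f).

Definition UQ_is (R : realType) (n : nat) (f : input n -> bool) (k : nat) :=
  (exists m (A : qalg R n m), [/\ qalg_valid A,
      forall x, qa_prob A x (f x) > 1 / 2 & qa_T A = k]) /\
  (forall m (A : qalg R n m), qalg_valid A ->
      (forall x, qa_prob A x (f x) > 1 / 2) -> (k <= qa_T A)%N).

Definition WUQ_is (R : realType) (n : nat) (f : input n -> bool) (c : R) :=
  (exists m (A : qalg R n m), [/\ qalg_valid A,
      qa_minsucc A f > 1 / 2 & qa_wucost A f = c]) /\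
  (forall m (A : qalg R n m), qalg_valid A ->
      qa_minsucc A f > 1 / 2 -> c <= qa_wucost A f).

(* The acceptance probability of a classical algorithm making T queries is a
   multilinear polynomial of degree at most T in the input bits; for a quantum
   algorithm the amplitudes have degree at most T, so the probability has degree
   at most 2T.  Under the uniform distribution PARITY is orthogonal to every
   polynomial of degree below n, so a polynomial of lower degree cannot give
   success probability above 1/2 on every input: T >= n classically and
   T >= ceil(n/2) quantumly, and the logarithmic term of the weakly unbounded
   cost is nonnegative.  Conversely, querying every bit computes PARITY exactly,
   and Deutsch's algorithm computes the xor of two bits with one quantum query;
   running it on the ceil(n/2) pairs of bits while keeping the parity so far as
   a relative phase computes PARITY exactly.  Exact algorithms have bias 1/2,
   hence no logarithmic term. *)

From HB Require Import structures.
From mathcomp Require Import all_boot all_order all_algebra perm.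
From mathcomp Require Import reals exp complex.
From mathcomp Require Import ring lra zify.
From Stdlib Require Import FunctionalExtensionality.
Set Implicit Arguments.
Unset Strict Implicit.
Unset Printing Implicit Defensive.
Local Open Scope ring_scope.
Import GRing.Theory Num.Theory Order.TTheory.

Section MultilinearDegree.
Variables (K : comNzRingType) (n : nat).

Definition monomial (S : {set 'I_n}) (x : input n) : K :=
  (S \subset [set i | x i])%:R.

Definition deg_le (d : nat) (g : input n -> K) :=
  exists2 s : seq (K * {set 'I_n}), all (fun p : K * {set 'I_n} => #|p.2| <= d)%N s &
    forall x, g x = \sum_(p <- s) p.1 * monomial p.2 x.

Lemma monomialM (S T : {set 'I_n}) x :
  monomial S x * monomial T x = monomial (S :|: T) x.
Proof.
by rewrite /monomial subUset; case: (S \subset _); case: (T \subset _); rewrite ?mulr1 ?mulr0.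
Qed.

Lemma eq_deg_le d g h : g =1 h -> deg_le d g -> deg_le d h.
Proof. by move=> gh [s s_d Hg]; exists s => // x; rewrite -gh. Qed.

Lemma deg_leW d d' g : (d <= d')%N -> deg_le d g -> deg_le d' g.
Proof.
move=> le_dd' [s /allP s_d Hg]; exists s => //.
by apply/allP => p /s_d /leq_trans; apply.
Qed.

Lemma deg_le_cst d c : deg_le d (fun=> c).
Proof.
exists [:: (c, set0)]; first by rewrite /= cards0.
by move=> x; rewrite big_seq1 /monomial sub0set mulr1.
Qed.

Lemma deg_leD d g h : deg_le d g -> deg_le d h -> deg_le d (fun x => g x + h x).
Proof.
move=> [s s_d Hg] [t t_d Hh]; exists (s ++ t); first by rewrite all_cat s_d.
by move=> x; rewrite big_cat /= Hg Hh.
Qed.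

Lemma deg_leZ d c g : deg_le d g -> deg_le d (fun x => c * g x).
Proof.
move=> [s s_d Hg]; exists [seq (c * p.1, p.2) | p <- s]; first by rewrite all_map.
by move=> x; rewrite big_map Hg mulr_sumr; apply: eq_bigr => p _; rewrite mulrA.
Qed.

Lemma deg_le_sum (T : Type) (r : seq T) (P : pred T) (F : T -> input n -> K) d :
  (forall t, List.In t r -> deg_le d (F t)) ->
  deg_le d (fun x => \sum_(t <- r | P t) F t x).
Proof.
elim: r => [|a r IH] Fd.
  by apply: eq_deg_le (deg_le_cst d 0) => x; rewrite big_nil.
have {}IH : deg_le d (fun x => \sum_(t <- r | P t) F t x).
  by apply: IH => t rt; apply: Fd; right.
case Pa: (P a).
  by apply: eq_deg_le (deg_leD (Fd a (or_introl erefl)) IH) => x; rewrite big_cons Pa.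
by apply: eq_deg_le IH => x; rewrite big_cons Pa.
Qed.

Lemma deg_leM a b g h : deg_le a g -> deg_le b h -> deg_le (a + b) (fun x => g x * h x).
Proof.
move=> [s /allP s_a Hg] [t /allP t_b Hh].
exists [seq (p.1 * q.1, p.2 :|: q.2) | p <- s, q <- t].
  apply/allP => _ /allpairsP [[p q] [/s_a p_a /t_b q_b ->]] /=.
  exact: leq_trans (leq_card_setU _ _) (leq_add p_a q_b).
move=> x; rewrite Hg Hh big_allpairs_dep mulr_suml; apply: eq_bigr => p _.
rewrite mulr_sumr; apply: eq_bigr => q _.
by rewrite -monomialM mulrACA.
Qed.

Lemma deg_le_bit i : deg_le 1 (fun x => (x i)%:R).
Proof.
exists [:: (1, [set i])]; first by rewrite /= cards1.
by move=> x; rewrite big_seq1 mul1r /monomial sub1set inE.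
Qed.

Lemma deg_le_if i d g h : deg_le d g -> deg_le d h ->
  deg_le d.+1 (fun x => if x i then g x else h x).
Proof.
move=> dg dh.
have dnot : deg_le 1 (fun x => 1 - (x i)%:R).
  apply: eq_deg_le (deg_leD (deg_le_cst 1 1) (deg_leZ (-1) (deg_le_bit i))).
  by move=> x; rewrite mulN1r.
apply: eq_deg_le (deg_leD (deg_leM (deg_le_bit i) dg) (deg_leM dnot dh)) => x.
by case: (x i); rewrite /= ?subrr ?subr0; ring.
Qed.

End MultilinearDegree.

Lemma deg_le_raddf (K K' : comNzRingType) (f : {additive K -> K'}) n d
    (g : input n -> K) :
  deg_le d g -> deg_le d (fun x => f (g x)).
Proof.
move=> [s s_d Hg]; exists [seq (f p.1, p.2) | p <- s]; first by rewrite all_map.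
move=> x; rewrite Hg big_map raddf_sum; apply: eq_bigr => p _.
by rewrite /monomial !mulr_natr raddfMn.
Qed.

Section ParityCorrelation.
Variables (R : realFieldType) (n : nat).

Definition parity_sign (x : input n) : R := (-1) ^+ parity x.

Definition flip_bit (j : 'I_n) (x : input n) : input n :=
  [ffun i => if i == j then ~~ x i else x i].

Lemma flip_bitK j : involutive (flip_bit j).
Proof.
by move=> x; apply/ffunP => i; rewrite !ffunE; case: eqP => // _; rewrite negbK.
Qed.

Lemma parity_flip_bit j x : parity (flip_bit j x) = ~~ parity x.
Proof.
rewrite /parity (bigD1 j) //= [in RHS](bigD1 j) //= ffunE eqxx addNb.
by congr (~~ (_ (+) _)); apply: eq_bigr => i /negbTE ij; rewrite ffunE ij.
Qed.

Lemma monomial_flip_bit j (S : {set 'I_n}) x :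
  j \notin S -> monomial R S (flip_bit j x) = monomial R S x.
Proof.
move=> jNS; rewrite /monomial; congr (nat_of_bool _)%:R.
apply/subsetP/subsetP => sub i iS; have := sub i iS; rewrite !inE ffunE;
  by case: eqP => // ij; move: jNS; rewrite -ij iS.
Qed.

(* Flipping a bit outside [S] is a sign-reversing involution on the summands. *)
Lemma sum_parity_sign_monomial (S : {set 'I_n}) :
  (#|S| < n)%N -> \sum_x parity_sign x * monomial R S x = 0.
Proof.
move=> ltSn; have /set0Pn [j] : ~: S != set0.
  by rewrite -card_gt0; have := cardsC S; rewrite card_ord; lia.
rewrite inE => jNS.
pose F x := parity_sign x * monomial R S x; change (\sum_x F x = 0).
have FN : \sum_x F x = - \sum_x F x.
  rewrite [LHS](reindex_inj (can_inj (flip_bitK j))) -sumrN; apply: eq_bigr => x _.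
  by rewrite /F /parity_sign parity_flip_bit signrN monomial_flip_bit // mulNr.
lra.
Qed.

Lemma sum_parity_sign_deg_le d g :
  (d < n)%N -> deg_le d g -> \sum_x parity_sign x * g x = 0.
Proof.
move=> ltdn [s /allP s_d Hg].
under eq_bigr do rewrite Hg mulr_sumr.
rewrite exchange_big /= big1_seq // => p /andP[_ /s_d p_d].
under eq_bigr do rewrite mulrCA.
by rewrite -mulr_sumr sum_parity_sign_monomial ?mulr0 // (leq_ltn_trans p_d).
Qed.

(* The margins [p x (parity x) - 1/2] are all positive, yet they sum to the
   correlation of the parity with a polynomial of degree [< n], which is 0. *)
Lemma deg_le_parity_lower_bound d (p : input n -> bool -> R) :
  deg_le d (p^~ true) -> (forall x, p x true + p x false = 1) ->
  (forall x, 1 / 2 < p x (parity x)) -> (n <= d)%N.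
Proof.
move=> pd psum psucc; rewrite leqNgt; apply/negP => ltdn.
pose margin x := p x (parity x) - 1 / 2.
have marginE x : margin x = parity_sign x * (1 / 2) - parity_sign x * p x true.
  by rewrite /margin /parity_sign; have := psum x; case: (parity x); rewrite /=; lra.
have margin_sum : \sum_x margin x = 0.
  rewrite (eq_bigr _ (fun x _ => marginE x)) sumrB (sum_parity_sign_deg_le ltdn pd).
  by rewrite (sum_parity_sign_deg_le (leq_ltn_trans (leq0n d) ltdn) (deg_le_cst _ _ _)) subr0.
have margin_gt0 x : 0 < margin x by have := psucc x; rewrite /margin; lra.
pose x0 : input n := [ffun=> false].
have := psumr_eq0P (fun x _ => ltW (margin_gt0 x)) margin_sum (i := x0) isT.
by have := margin_gt0 x0; lra.
Qed.

End ParityCorrelation.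

Lemma wucost_lower_bound (R : realType) (k T : nat) (p : R) :
  (k <= T)%N -> 1 / 2 < p -> p <= 1 -> k%:R <= T%:R + log2 (1 / (2 * (p - 1 / 2))).
Proof.
move=> le_kT p_gt p_le1.
have log_ge0 : 0 <= log2 (1 / (2 * (p - 1 / 2))).
  by apply: divr_ge0; apply: ln_ge0; [rewrite ler_pdivlMr|]; lra.
have : k%:R <= T%:R :> R by rewrite ler_nat.
lra.
Qed.

Lemma wucost_exact (R : realType) (T : nat) :
  T%:R + log2 (1 / (2 * (1 - 1 / 2))) = T%:R :> R.
Proof.
have -> : 1 / (2 * (1 - 1 / 2)) = 1 :> R by field.
by rewrite /log2 ln1 mul0r addr0.
Qed.

Lemma eq_bigmin1 (R : realType) (T : finType) (F : T -> R) :
  F =1 (fun=> 1) -> \big[Num.min/1]_(x : T) F x = 1.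
Proof. by move=> F1; rewrite (eq_bigr _ (fun x _ => F1 x)) big_const_idem //; apply: minxx. Qed.

Section ClassicalQueries.
Variables (R : realType) (n : nat).

Lemma deg_le_dt_eval (t : dtree n) b :
  deg_le (dt_depth t) (fun x => (dt_eval t x == b)%:R : R).
Proof.
elim: t => [c|i t0 IH0 t1 IH1] /=; first exact: deg_le_cst.
apply: eq_deg_le (deg_le_if i (deg_leW (leq_maxr _ _) IH1) (deg_leW (leq_maxl _ _) IH0)).
by move=> x; case: (x i).
Qed.

Lemma deg_le_ra_prob (A : rand_alg R n) b :
  rand_alg_valid A -> deg_le (ra_T A) (ra_prob A ^~ b).
Proof.
case=> _ _ depth_le; apply: deg_le_sum => p /depth_le p_le.
exact/deg_leZ/(deg_leW p_le)/deg_le_dt_eval.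
Qed.

Lemma ra_prob_sum (A : rand_alg R n) x :
  rand_alg_valid A -> ra_prob A x true + ra_prob A x false = 1.
Proof.
case=> _ dist_sum _; rewrite /ra_prob -big_split /= -[RHS]dist_sum.
by apply: eq_bigr => p _; case: (dt_eval p.2 x); rewrite /= mulr1 mulr0 ?addr0 ?add0r.
Qed.

Lemma rand_alg_parity_lower_bound (A : rand_alg R n) : rand_alg_valid A ->
  (forall x, 1 / 2 < ra_prob A x (parity x)) -> (n <= ra_T A)%N.
Proof.
move=> A_valid; apply: deg_le_parity_lower_bound (deg_le_ra_prob true A_valid) _.
by move=> x; apply: ra_prob_sum.
Qed.

Fixpoint xor_tree (l : seq 'I_n) (b : bool) : dtree n :=
  if l is i :: l' then DQuery i (xor_tree l' b) (xor_tree l' (~~ b)) else DLeaf n b.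

Lemma dt_eval_xor_tree l b x :
  dt_eval (xor_tree l b) x = b (+) \big[addb/false]_(i <- l) x i.
Proof.
elim: l b => [|i l IH] b /=; first by rewrite big_nil addbF.
by rewrite big_cons !IH; case: (x i); rewrite /= ?addbN ?addNb // addbA addbb.
Qed.

Lemma dt_depth_xor_tree l b : dt_depth (xor_tree l b) = size l.
Proof. by elim: l b => [|i l IH] b //=; rewrite !IH maxnn. Qed.

Definition parity_tree := xor_tree (enum 'I_n) false.

Lemma dt_eval_parity_tree x : dt_eval parity_tree x = parity x.
Proof. by rewrite dt_eval_xor_tree big_enum. Qed.

Lemma dt_depth_parity_tree : dt_depth parity_tree = n.
Proof. by rewrite dt_depth_xor_tree size_enum_ord. Qed.

Definition det_alg (t : dtree n) : rand_alg R n := RandAlg (dt_depth t) [:: (1, t)].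

Lemma det_alg_valid t : rand_alg_valid (det_alg t).
Proof. by split=> [p [<-|[]]|/=|p [<-|[]]]; rewrite ?big_seq1. Qed.

Lemma ra_prob_det_alg t x b : ra_prob (det_alg t) x b = (dt_eval t x == b)%:R.
Proof. by rewrite /ra_prob big_seq1 mul1r. Qed.

End ClassicalQueries.

Lemma sum_delta_r (S : pzSemiRingType) (T : finType) (F : T -> S) t0 :
  \sum_t F t * (t == t0)%:R = F t0.
Proof.
rewrite (bigD1 t0) //= eqxx mulr1 big1 ?addr0 // => t /negbTE ->.
by rewrite mulr0.
Qed.

Lemma sum_delta_l (S : pzSemiRingType) (T : finType) (F : T -> S) t0 :
  \sum_t (t0 == t)%:R * F t = F t0.
Proof.
rewrite (bigD1 t0) //= eqxx mul1r big1 ?addr0 // => t tt0.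
by rewrite eq_sym (negbTE tt0) mul0r.
Qed.

Section QuantumLowerBound.
Variables (R : realType) (n m : nat).

Definition query_rounds (x : input n) (v : qvec R n m) (Us : seq (qop R n m)) :=
  foldl (fun w U => qapply U (oracle x w)) v Us.

Lemma deg_le_oracle d (v : input n -> qvec R n m) :
  (forall s, deg_le d (v^~ s)) -> forall s, deg_le d.+1 (fun x => oracle x (v x) s).
Proof.
move=> vd [[i b] z]; rewrite /oracle /=.
apply: eq_deg_le (deg_le_if i (vd (i, ~~ b, z)) (vd (i, b, z))) => x.
by case: (x i); rewrite ?addbT ?addbF.
Qed.

Lemma deg_le_qapply d (U : qop R n m) (v : input n -> qvec R n m) :
  (forall s, deg_le d (v^~ s)) -> forall s, deg_le d (fun x => qapply U (v x) s).
Proof. by move=> vd s; apply: deg_le_sum => t _; apply: deg_leZ. Qed.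

Lemma deg_le_query_rounds (Us : seq (qop R n m)) d (v : input n -> qvec R n m) :
  (forall s, deg_le d (v^~ s)) ->
  forall s, deg_le (d + size Us) (fun x => query_rounds x (v x) Us s).
Proof.
elim: Us d v => [|U Us IH] d v vd s /=; first by rewrite addn0.
rewrite addnS -addSn; apply: (IH _ (fun x => qapply U (oracle x (v x)))).
exact/deg_le_qapply/deg_le_oracle.
Qed.

Lemma deg_le_qa_final (A : qalg R n m) s : deg_le (qa_T A) (qa_final A ^~ s).
Proof.
rewrite -[qa_T A]add0n; apply: (deg_le_query_rounds _ (v := fun=> _)) => t.
exact: deg_le_cst.
Qed.

Lemma deg_le_normsq d (g : input n -> R[i]) :
  deg_le d g -> deg_le (d + d) (fun x => normsq (g x)).
Proof.
move=> gd.
have Re_d := deg_le_raddf (@complex.Re R : {additive Rcomplex R -> R}) gd.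
have Im_d := deg_le_raddf (@complex.Im R : {additive Rcomplex R -> R}) gd.
apply: eq_deg_le (deg_leD (deg_leM Re_d Re_d) (deg_leM Im_d Im_d)) => x.
by rewrite /normsq !expr2.
Qed.

Lemma deg_le_qa_prob (A : qalg R n m) b : deg_le (qa_T A + qa_T A) (qa_prob A ^~ b).
Proof. by apply: deg_le_sum => s _; apply/deg_le_normsq/deg_le_qa_final. Qed.

Definition sqnorm (v : qvec R n m) := \sum_s v s * (v s)^*.

Lemma normsq_conj (z : R[i]) : ((normsq z)%:C = z * z^*)%C.
Proof.
case: z => a b; rewrite /normsq /=; simpc; rewrite -complexr0 !expr2.
by congr (Complex _ _); ring.
Qed.

Lemma sqnorm_qapply (U : qop R n m) v : unitary U -> sqnorm (qapply U v) = sqnorm v.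
Proof.
case=> _ U_cols; rewrite /sqnorm /qapply.
transitivity (\sum_s \sum_t \sum_t' (v t * (v t')^*) * ((U s t')^* * U s t)).
  apply: eq_bigr => s _; rewrite rmorph_sum mulr_suml; apply: eq_bigr => t _.
  by rewrite mulr_sumr; apply: eq_bigr => t' _; rewrite rmorphM; ring.
rewrite exchange_big /=; apply: eq_bigr => t _.
rewrite exchange_big /= -[RHS](sum_delta_r (fun t' => v t * (v t')^*) t).
by apply: eq_bigr => t' _; rewrite -mulr_sumr U_cols.
Qed.

Lemma sqnorm_oracle x v : sqnorm (oracle x v) = sqnorm v.
Proof.
pose flip_answer (s : qbasis n m) := (s.1.1, s.1.2 (+) x s.1.1, s.2).
have flip_answerK : involutive flip_answer by move=> [[i b] z]; rewrite /flip_answer /= addbK.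
by rewrite /sqnorm [RHS](reindex_inj (can_inj flip_answerK)).
Qed.

Lemma sqnorm_ket s0 : sqnorm (ket R s0) = 1.
Proof.
rewrite /sqnorm /ket -[RHS](sum_delta_r (fun=> 1) s0); apply: eq_bigr => s _.
by case: (s == s0); rewrite /= ?conjC1 ?conjC0 ?mulr1 ?mulr0.
Qed.

Lemma sqnorm_query_rounds x (Us : seq (qop R n m)) v :
  (forall U, List.In U Us -> unitary U) -> sqnorm (query_rounds x v Us) = sqnorm v.
Proof.
elim: Us v => [|U Us IH] v Us_unitary //=.
rewrite IH; last by move=> U' U'_Us; apply: Us_unitary; right.
by rewrite sqnorm_qapply ?sqnorm_oracle //; apply: Us_unitary; left.
Qed.

Lemma qa_final_normsq_sum (A : qalg R n m) x : qalg_valid A ->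
  \sum_s normsq (qa_final A x s) = 1.
Proof.
case=> U0_unitary Us_unitary; apply: complexI.
rewrite rmorph_sum (eq_bigr _ (fun s _ => normsq_conj _)) -/(sqnorm _).
by rewrite sqnorm_query_rounds // sqnorm_qapply // sqnorm_ket rmorph1.
Qed.

Lemma qa_prob_sum (A : qalg R n m) x : qalg_valid A ->
  qa_prob A x true + qa_prob A x false = 1.
Proof.
move=> A_valid; rewrite -(qa_final_normsq_sum x A_valid) [RHS](bigID (qa_out A)) /=.
by congr (_ + _); apply: eq_bigl => s; case: (qa_out A s).
Qed.

Lemma qalg_parity_lower_bound (A : qalg R n m) : qalg_valid A ->
  (forall x, 1 / 2 < qa_prob A x (parity x)) -> (n.+1 %/ 2 <= qa_T A)%N.
Proof.
move=> A_valid succ.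
suff : (n <= qa_T A + qa_T A)%N by lia.
apply: deg_le_parity_lower_bound (deg_le_qa_prob A true) _ succ.
by move=> x; apply: qa_prob_sum.
Qed.

End QuantumLowerBound.

Lemma tperm_eq_r (T : finType) (a b i : T) : (tperm a b i == b) = (i == a).
Proof. by rewrite (canF_eq (tpermK a b)) tpermR. Qed.

Lemma ord2_cases (z : 'I_2) : z = ord0 \/ z = ord_max.
Proof. by case: z => [[|[|k]] hk]; [left|right|] => //; apply/eqP. Qed.

Section QuantumPairAlgorithm.
Variables (R : realType) (n : nat).
Hypothesis n_gt0 : (0 < n)%N.

Local Notation qb := (qbasis n 1).
Local Notation sgn b := ((-1) ^+ b : R[i]).

Definition ctrl (z : 'I_2) : bool := z != ord0.

Lemma sum_qbasis (F : qb -> R[i]) :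
  \sum_s F s = \sum_(i : 'I_n) (F (i, false, ord0) + F (i, false, ord_max)
                 + F (i, true, ord0) + F (i, true, ord_max)).
Proof.
rewrite (eq_bigr (fun s => F (s.1, s.2))); last by case.
rewrite -(pair_bigA _ (fun a b => F (a, b))) /=.
rewrite (eq_bigr (fun p => \sum_j F ((p.1, p.2), j))); last by case.
rewrite -(pair_bigA _ (fun a b => \sum_j F ((a, b), j))) /=; apply: eq_bigr => i _.
rewrite big_bool /= !big_ord_recl big_ord0 !addr0.
have -> : lift ord0 (ord0 : 'I_1) = ord_max by apply/eqP.
by rewrite big_ord0 addr0; ring.
Qed.

Lemma sum_qbasis_delta (F : qb -> R[i]) (i1 i2 : 'I_n) :
  \sum_s (i1 == s.1.1)%:R * (s.1.1 == i2)%:R * F s =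
  (i1 == i2)%:R * (F (i1, false, ord0) + F (i1, false, ord_max)
                 + F (i1, true, ord0) + F (i1, true, ord_max)).
Proof.
rewrite sum_qbasis /= -[RHS](sum_delta_l (fun i => (i == i2)%:R * (F (i, false, ord0)
  + F (i, false, ord_max) + F (i, true, ord0) + F (i, true, ord_max)))).
by apply: eq_bigr => i _; ring.
Qed.

Definition signed_row_perm (p : qb -> qb) (sigma : qb -> bool) (M : qop R n 1)
  : qop R n 1 := fun s t => sgn (sigma s) * M (p s) t.

Definition signed_col_perm (p : qb -> qb) (sigma : qb -> bool) (M : qop R n 1)
  : qop R n 1 := fun s t => M s (p t) * sgn (sigma t).

Definition qid : qop R n 1 := fun s t => (s == t)%:R.

Lemma sgn_delta (sigma : qb -> bool) (s t : qb) (b : bool) :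
  b = (s == t) -> sgn (sigma s) * sgn (sigma t) * b%:R = (s == t)%:R.
Proof.
by move=> ->; case: eqP => [->|_]; rewrite ?mulr0 // -signr_addb addbb mulr1.
Qed.

Lemma signed_row_perm_unitary p sigma M :
  injective p -> unitary M -> unitary (signed_row_perm p sigma M).
Proof.
move=> p_inj [M_rows M_cols]; split=> s t; rewrite /signed_row_perm.
  under eq_bigr do rewrite rmorphM rmorph_sign mulrACA.
  by rewrite -mulr_sumr M_rows; apply: sgn_delta; rewrite (inj_eq p_inj).
under eq_bigr do rewrite rmorphM rmorph_sign mulrACA -signr_addb addbb mul1r.
by rewrite -M_cols [RHS](reindex_inj p_inj).
Qed.

Lemma signed_col_perm_unitary p sigma M :
  injective p -> unitary M -> unitary (signed_col_perm p sigma M).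
Proof.
move=> p_inj [M_rows M_cols]; split=> s t; rewrite /signed_col_perm.
  under eq_bigr do rewrite rmorphM rmorph_sign mulrACA -signr_addb addbb mulr1.
  by rewrite -M_rows [RHS](reindex_inj p_inj).
under eq_bigr do rewrite rmorphM rmorph_sign mulrACA mulrC.
by rewrite -mulr_sumr M_cols; apply: sgn_delta; rewrite (inj_eq p_inj).
Qed.

Lemma qid_unitary : unitary qid.
Proof.
split=> s t; rewrite /qid.
  by under eq_bigr => k _ do rewrite rmorph_nat (eq_sym t); rewrite sum_delta_l.
by under eq_bigr => k _ do rewrite rmorph_nat (eq_sym k s); rewrite sum_delta_l.
Qed.

(* Hadamard gates on the answer register and on the control bit, identity on
   the query register. *)
Definition hadamard : qop R n 1 := fun s t =>
  (s.1.1 == t.1.1)%:R * (1 / 2) * sgn (s.1.2 && t.1.2) * sgn (ctrl s.2 && ctrl t.2).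

Lemma conj_hadamard s t : (hadamard s t)^* = hadamard s t.
Proof. by rewrite /hadamard !(rmorphM, rmorph_nat, rmorph_sign, rmorph1, fmorphV). Qed.

Lemma hadamardC s t : hadamard s t = hadamard t s.
Proof. by rewrite /hadamard eq_sym andbC [ctrl t.2 && _]andbC. Qed.

Lemma hadamardK s t : \sum_k hadamard s k * hadamard k t = (s == t)%:R.
Proof.
rewrite (eq_bigr (fun k => (s.1.1 == k.1.1)%:R * (k.1.1 == t.1.1)%:R *
   ((1 / 2) * sgn (s.1.2 && k.1.2) * sgn (ctrl s.2 && ctrl k.2) *
    ((1 / 2) * sgn (k.1.2 && t.1.2) * sgn (ctrl k.2 && ctrl t.2))))); last first.
  by move=> k _; rewrite /hadamard; ring.
rewrite sum_qbasis_delta /=.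
case: s => [[i1 b1] z1]; case: t => [[i2 b2] z2] /=.
rewrite -[((i1, b1, z1) == (i2, b2, z2))]/((i1 == i2) && (b1 == b2) && (z1 == z2)).
case: (ord2_cases z1) => ->; case: (ord2_cases z2) => ->; case: b1; case: b2;
  rewrite /ctrl /= ?andbT ?andbF; case: (i1 == i2); rewrite /= ?mul0r //; by field.
Qed.

Lemma hadamard_unitary : unitary hadamard.
Proof.
by split=> s t; rewrite -hadamardK; apply: eq_bigr => k _;
  rewrite conj_hadamard ?(hadamardC t k) ?(hadamardC k s).
Qed.

Definition npairs := (n.+1 %/ 2)%N.
Definition i0 : 'I_n := Ordinal n_gt0.
Definition lone j := ~~ (j.*2.+1 < n)%N.
Definition pair_index j (c : bool) : 'I_n :=
  insubd i0 (if c && (j.*2.+1 < n)%N then j.*2.+1 else j.*2).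
Definition phase_bit j b c : bool := b && ~~ (c && lone j).
Definition pair_bit (x : input n) j c := x (pair_index j c) && ~~ (c && lone j).

(* [pair_state j g r] is (g/2) sum_(b,c) (-1)^(phase_bit j b c + r c) |pair_index j c, b, c>:
   the control bit [c] selects an element of the [j]-th pair [{2j, 2j+1}], the
   answer register is in state |-> (or |+> for the missing second element of a
   [lone] last pair), so a query kicks back the phase (-1)^(pair_bit x j c);
   the parity of the pairs seen so far is kept as the relative phase [r]. *)
Definition pair_state j (g : R[i]) (r : bool) : qvec R n 1 := fun s =>
  g * ((s.1.1 == pair_index j (ctrl s.2))%:R * (1 / 2)
       * sgn (phase_bit j s.1.2 (ctrl s.2)) * sgn (r && ctrl s.2)).

Lemma oracle_pair_state x j g r : oracle x (pair_state j g r) =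
  pair_state j (g * sgn (pair_bit x j false)) (r (+) pair_bit x j false (+) pair_bit x j true).
Proof.
apply: functional_extensionality => -[[i b] z]; rewrite /oracle /pair_state /=.
case: eqP => [->|_]; last by rewrite !mul0r !mulr0.
rewrite /pair_bit /phase_bit; case: (ctrl z); case: (lone j); case: b; case: r;
  case: (x (pair_index j true)); case: (x (pair_index j false)); rewrite /=; ring.
Qed.

Definition move_query (a b : bool -> 'I_n) (s : qb) : qb :=
  (tperm (a (ctrl s.2)) (b (ctrl s.2)) s.1.1, s.1.2, s.2).

Lemma move_queryK a b : involutive (move_query a b).
Proof. by move=> [[i c] z]; rewrite /move_query /= tpermK. Qed.

Lemma move_query_inj a b : injective (move_query a b).
Proof. exact: can_inj (move_queryK a b). Qed.

Definition init_basis : qb := (i0, true, ord0).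

Definition prepare : qop R n 1 :=
  signed_row_perm (move_query (pair_index 0) (fun=> i0))
    (fun s => s.1.2 (+) phase_bit 0 s.1.2 (ctrl s.2)) hadamard.

Lemma prepare_ket : qapply prepare (ket R init_basis) = pair_state 0 1 false.
Proof.
apply: functional_extensionality => -[[i b] z]; rewrite /qapply /ket sum_delta_r.
rewrite /prepare /signed_row_perm /hadamard /move_query /pair_state /= tperm_eq_r.
by case: (i == _); rewrite /phase_bit; case: b; case: (ctrl z); case: (lone 0); rewrite /=; ring.
Qed.

Definition advance j : qop R n 1 :=
  signed_row_perm (move_query (pair_index j.+1) (pair_index j))
    (fun s => phase_bit j s.1.2 (ctrl s.2) (+) phase_bit j.+1 s.1.2 (ctrl s.2)) qid.

Lemma advance_pair_state j g r :
  qapply (advance j) (pair_state j g r) = pair_state j.+1 g r.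
Proof.
apply: functional_extensionality => -[[i b] z].
rewrite /qapply /advance /signed_row_perm /qid.
under eq_bigr do rewrite -mulrA.
rewrite -mulr_sumr sum_delta_l /pair_state /move_query /= tperm_eq_r.
by case: (i == _); rewrite /phase_bit; case: b; case: (ctrl z); case: (lone j);
  case: (lone j.+1); case: r; rewrite /=; ring.
Qed.

Definition finish : qop R n 1 :=
  signed_col_perm (move_query (fun=> i0) (pair_index npairs.-1))
    (fun t => phase_bit npairs.-1 t.1.2 (ctrl t.2) (+) t.1.2) hadamard.

Definition final_state (g : R[i]) (r : bool) : qvec R n 1 := fun s =>
  g * ((s.1.1 == i0) && s.1.2 && (ctrl s.2 == r))%:R.

Lemma finish_pair_state g r : qapply finish (pair_state npairs.-1 g r) = final_state g r.
Proof.
apply: functional_extensionality => s; rewrite /qapply /finish /signed_col_perm.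
rewrite (reindex_inj (@move_query_inj (fun=> i0) (pair_index npairs.-1))) /=.
rewrite (eq_bigr (fun t => (s.1.1 == t.1.1)%:R * (t.1.1 == i0)%:R *
   ((1 / 2) * sgn (s.1.2 && t.1.2) * sgn (ctrl s.2 && ctrl t.2) *
    (g * (1 / 2) * sgn t.1.2 * sgn (r && ctrl t.2))))); last first.
  move=> [[i b] z] _; rewrite move_queryK /hadamard /pair_state /move_query /= tperm_eq_r.
  case: (i == i0); case: (s.1.1 == i); rewrite /phase_bit; case: b; case: (ctrl z);
    case: (lone npairs.-1); rewrite /=; ring.
rewrite sum_qbasis_delta /final_state; case: s => [[i1 b1] z1] /=.
case: (ord2_cases z1) => ->; case: b1; case: r; rewrite /ctrl /=;
  case: (i1 == i0); rewrite /= ?mul0r ?mulr0 //; by field.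
Qed.

Definition pair_alg : qalg R n 1 :=
  QAlg init_basis prepare (rcons (mkseq advance npairs.-1) finish) (fun s => ctrl s.2).

Lemma npairs_gt0 : (0 < npairs)%N.
Proof. rewrite /npairs; lia. Qed.

Lemma pair_alg_T : qa_T pair_alg = npairs.
Proof. by rewrite /qa_T /= size_rcons size_mkseq prednK // npairs_gt0. Qed.

Lemma pair_alg_valid : qalg_valid pair_alg.
Proof.
split.
  by apply: signed_row_perm_unitary; [exact: move_query_inj | exact: hadamard_unitary].
move=> U /=; rewrite -cats1 => U_in; case: (List.in_app_or _ _ _ U_in) => [|[<-|[]]].
  by rewrite /mkseq => /(List.in_map_iff _ _ _) [j [<- _]];
    apply: signed_row_perm_unitary; [exact: move_query_inj | exact: qid_unitary].
by apply: signed_col_perm_unitary; [exact: move_query_inj | exact: hadamard_unitary].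
Qed.

Definition pairs_xor (x : input n) j :=
  \big[addb/false]_(0 <= l < j) (pair_bit x l false (+) pair_bit x l true).

Lemma query_rounds_pair_state x j : exists g : bool,
  query_rounds x (qapply prepare (ket R init_basis)) (mkseq advance j)
  = pair_state j (sgn g) (pairs_xor x j).
Proof.
elim: j => [|j [g IH]]; first by exists false; rewrite /pairs_xor big_geq //= prepare_ket.
exists (g (+) pair_bit x j false).
rewrite mkseqS /query_rounds foldl_rcons -/(query_rounds _ _ _) IH oracle_pair_state.
by rewrite advance_pair_state signr_addb /pairs_xor big_nat_recr //= addbA.
Qed.

Definition bit_at (x : input n) (k : nat) : bool := x (insubd i0 k).

Lemma pairs_xor_prefix x l : (l <= npairs)%N ->
  pairs_xor x l = \big[addb/false]_(0 <= i < minn l.*2 n) bit_at x i.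
Proof.
elim: l => [|l IH] le_l; first by rewrite /pairs_xor !big_geq //; lia.
rewrite /pairs_xor big_nat_recr //= -/(pairs_xor x l) IH; last by lia.
have lt_2l : (l.*2 < n)%N by move: le_l; rewrite /npairs; lia.
rewrite /pair_bit /pair_index /lone /= andbT.
case: (ltnP l.*2.+1 n) => le_2l1 /=.
  rewrite (_ : minn l.+1.*2 n = l.*2.+2); last by lia.
  rewrite (_ : minn l.*2 n = l.*2); last by lia.
  by rewrite !big_nat_recr //= andbT /bit_at addbA.
rewrite (_ : minn l.+1.*2 n = l.*2.+1); last by lia.
rewrite (_ : minn l.*2 n = l.*2); last by lia.
by rewrite big_nat_recr //= andbF !addbF.
Qed.

Lemma pairs_xor_parity x : pairs_xor x npairs = parity x.
Proof.
rewrite pairs_xor_prefix // (_ : minn npairs.*2 n = n); last by rewrite /npairs; lia.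
by rewrite /parity big_mkord; apply: eq_bigr => i _; rewrite /bit_at valKd.
Qed.

Lemma qa_final_pair_alg x : exists g : bool, qa_final pair_alg x = final_state (sgn g) (parity x).
Proof.
have [g IH] := query_rounds_pair_state x npairs.-1.
exists (g (+) pair_bit x npairs.-1 false).
rewrite /qa_final /= foldl_rcons -/(query_rounds _ _ _) IH oracle_pair_state finish_pair_state.
rewrite signr_addb -pairs_xor_parity; congr final_state.
by rewrite -[in RHS](prednK npairs_gt0) /pairs_xor big_nat_recr //= addbA.
Qed.

Lemma normsq_sgn_nat (g b : bool) : normsq (sgn g * b%:R) = b%:R.
Proof. by case: g; case: b; rewrite /normsq /=; simpc; ring. Qed.

Lemma qa_prob_pair_alg x : qa_prob pair_alg x (parity x) = 1.
Proof.
have [g final_eq] := qa_final_pair_alg x.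
pose s_out : qb := (i0, true, if parity x then ord_max else ord0).
rewrite /qa_prob final_eq big_mkcond /= -[RHS](sum_delta_l (fun=> 1) s_out).
apply: eq_bigr => -[[i b] z] _; rewrite /final_state /= normsq_sgn_nat mulr1.
rewrite /s_out !xpair_eqE (eq_sym i0).
by case: (ord2_cases z) => ->; case: b; case: (parity x); case: (i == i0).
Qed.

End QuantumPairAlgorithm.

Theorem mainTheorem10 (R : realType) (n : nat) (hn : (0 < n)%N) :
  [/\ @UC_is R n (@parity n) n,
      @WUC_is R n (@parity n) n%:R,
      @UQ_is R n (@parity n) (n.+1 %/ 2)%N
    & @WUQ_is R n (@parity n) (n.+1 %/ 2)%N%:R].
Proof.
pose D := det_alg R (parity_tree n); pose Q := pair_alg R hn.
have D_succ x : ra_prob D x (parity x) = 1.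
  by rewrite ra_prob_det_alg dt_eval_parity_tree eqxx.
have D_minsucc : ra_minsucc D (@parity n) = 1 := eq_bigmin1 D_succ.
have Q_minsucc : qa_minsucc Q (@parity n) = 1 := eq_bigmin1 (qa_prob_pair_alg R hn).
have half_lt1 : 1 / 2 < 1 :> R by lra.
split; split.
- exists D; split => [|x|]; first exact: det_alg_valid.
    by rewrite D_succ.
  exact: dt_depth_parity_tree.
- exact: rand_alg_parity_lower_bound.
- exists D; split; rewrite ?D_minsucc //; first exact: det_alg_valid.
  by rewrite /ra_wucost /ra_bias D_minsucc wucost_exact /= dt_depth_parity_tree.
- move=> A A_valid gt_minsucc; rewrite /ra_wucost /ra_bias.
  apply: (wucost_lower_bound _ gt_minsucc); last exact: bigmin_le_id.
  apply: rand_alg_parity_lower_bound A_valid _ => x.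
  by apply: lt_le_trans gt_minsucc _; apply: bigmin_le.
- exists 1%N, Q; split => [|x|]; first exact: pair_alg_valid.
    by rewrite qa_prob_pair_alg.
  exact: pair_alg_T.
- exact: qalg_parity_lower_bound.
- exists 1%N, Q; split; rewrite ?Q_minsucc //; first exact: pair_alg_valid.
  by rewrite /qa_wucost /qa_bias Q_minsucc wucost_exact pair_alg_T.
- move=> m A A_valid gt_minsucc; rewrite /qa_wucost /qa_bias.
  apply: (wucost_lower_bound _ gt_minsucc); last exact: bigmin_le_id.
  apply: qalg_parity_lower_bound A_valid _ => x.
  by apply: lt_le_trans gt_minsucc _; apply: bigmin_le.
Qed.
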